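(* Let $A, B \in U(2)$ with $\det(A)\det(B) = 1$, and let $G(A,B)$ be the corresponding parity-preserving two-qubit unitary. Then there exist real numbers $\tau_1,\tau_2,\tau_3,\tau_4,a,b,c$ such that $$G(A,B) = G\bigl(R_z(\tau_1), R_z(\tau_2)\bigr)\, e^{\,i(a\, X\otimes X + b\, Y\otimes Y + c\, Z\otimes Z)}\, G\bigl(R_z(\tau_3), R_z(\tau_4)\bigr).$$
   Context: For $2\times 2$ matrices $A=(A_{ij})$ and $B=(B_{ij})$, $G(A,B)$ denotes the $4\times 4$ matrix, in the computational basis $\{|00\rangle,|01\rangle,|10\rangle,|11\rangle\}$ of two qubits, given by $$G(A,B)=\begin{pmatrix} A_{11}&0&0&A_{12}\\ 0&B_{11}&B_{12}&0\\ 0&B_{21}&B_{22}&0\\ A_{21}&0&0&A_{22}\end{pmatrix},$$ i.e. $A$ acts on the even-parity subspace spanned by $|00\rangle,|11\rangle$ and $B$ on the odd-parity subspace spanned by $|01\rangle,|10\rangle$. A parity-preserving (P.P.) unitary is a unitary of this form (so $A,B$ are unitary). $X,Y,Z$ are the Pauli matrices, and $R_z(\theta)=\mathrm{diag}(e^{i\theta},e^{-i\theta})$. *)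

From HB Require Import structures.
From mathcomp Require Import all_boot all_order all_algebra.
From mathcomp Require Import complex mxtens.
From mathcomp Require Import all_classical all_reals all_analysis.
Set Implicit Arguments. Unset Strict Implicit. Unset Printing Implicit Defensive.
Import Order.TTheory GRing.Theory Num.Theory numFieldNormedType.Exports.
Local Open Scope ring_scope.
Local Open Scope complex_scope.

Section QDefs.
Variable R : realType.
Local Notation C := (R[i]).

Definition expi (t : R) : C := cos t +i* sin t.

Definition expm (n : nat) (M : 'M[C]_n) : 'M[C]_n :=
  \matrix_(j, k) limn ((fun N => (\sum_(m < N) (m`!%:R)^-1 *: M ^+ m) j k)
                        : nat -> (C : numFieldType)).

Definition adjmx (m n : nat) (M : 'M[C]_(m, n)) : 'M[C]_(n, m) := (map_mx conjc M)^T.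
Definition unitary (n : nat) (M : 'M[C]_n) : Prop := M *m adjmx M = 1%:M.

Definition PauliX : 'M[C]_2 := \matrix_(i, j) (if i == j then 0 else 1).
Definition PauliY : 'M[C]_2 :=
  \matrix_(i, j) (if i == j then 0 else if i == ord0 then - (0 +i* 1) else (0 +i* 1)).
Definition PauliZ : 'M[C]_2 :=
  \matrix_(i, j) (if i == j then (if i == ord0 then 1 else -1) else 0).

Definition Rz (t : R) : 'M[C]_2 :=
  \matrix_(i, j) (if i == j then (if i == ord0 then expi t else expi (- t)) else 0).

(* G(A,B) in the basis |00>,|01>,|10>,|11> (indices 0,1,2,3) *)
Definition Gmx (A B : 'M[C]_2) : 'M[C]_(2 * 2) :=
  \matrix_(i, j)
    match nat_of_ord i, nat_of_ord j with
    | 0, 0 => A ord0 ord0    | 0, 3 => A ord0 ord_max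
    | 3, 0 => A ord_max ord0 | 3, 3 => A ord_max ord_max
    | 1, 1 => B ord0 ord0    | 1, 2 => B ord0 ord_max
    | 2, 1 => B ord_max ord0 | 2, 2 => B ord_max ord_max
    | _, _ => 0
    end.

End QDefs.

From HB Require Import structures.
From mathcomp Require Import all_boot all_order all_algebra.
From mathcomp Require Import complex mxtens.
From mathcomp Require Import all_classical all_reals all_analysis.
From mathcomp Require Import ring lra.
Import Order.TTheory GRing.Theory Num.Theory numFieldNormedType.Exports.
Local Open Scope ring_scope.
Local Open Scope complex_scope.

(** Both factors of the statement are block diagonal for the parity
    decomposition, on which [G] is multiplicative.  On each parity block the
    coupling [i(aXX + bYY + cZZ)] is diagonal in the basis |+>, |->, so its
    exponential is [G(H diag(e^{i(c+a-b)}, e^{i(c-a+b)}) H,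
    H diag(e^{i(a+b-c)}, e^{-i(a+b+c)}) H)] with [H] the Hadamard matrix, and
    [H diag(e^{i(d+θ)}, e^{i(d-θ)}) H = e^{id} e^{iθX}].  On the other hand
    every [P ∈ U(2)] with [det P = e^{iδ}] has a Z-X-Z Euler decomposition
    [P = e^{iδ/2} R_z(t) e^{iθX} R_z(t')].  Since [det A det B = 1] the global
    phases of [A] and [B] are opposite, and the four phases [±δ/2 ± θ_A],
    [∓δ/2 ± θ_B] are matched by [a = (θ_A+θ_B)/2], [b = (θ_B-θ_A)/2],
    [c = δ/2]. *)

Lemma sum_ord2 (V : nmodType) (F : 'I_2 -> V) : \sum_(k < 2) F k = F ord0 + F ord_max.
Proof. by rewrite !big_ord_recr big_ord0 /= add0r; congr (F _ + _); exact: val_inj. Qed.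

Lemma ord2P (i : 'I_2) : i = ord0 \/ i = ord_max.
Proof. by case: i => [[|[|i]] Hi] //; [left|right]; apply: val_inj. Qed.

Section TwoQubit.
Variable R : realType.
Local Notation C := (R[i]).
Local Notation CN := (Num.NumField.sort (R[i] : numFieldType)).
Local Open Scope classical_set_scope.
Set Implicit Arguments.
Unset Strict Implicit.

Lemma two_neq0 : (2 : C) != 0.
Proof. by rewrite pnatr_eq0. Qed.

Lemma Gmx_mul (A B A' B' : 'M[C]_2) :
  Gmx A B *m Gmx A' B' = Gmx (A *m A') (B *m B').
Proof.
apply/matrixP => i j; rewrite [LHS]mxE (big_ord_recr 3) !big_ord_recr /= big_ord0 !mxE.
case: i => [[|[|[|[|i]]]] Hi] //=; case: j => [[|[|[|[|j]]]] Hj] //=.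
all: rewrite ?mxE ?sum_ord2 /=; ring.
Qed.

Lemma Gmx1 : Gmx (1 : 'M[C]_2) 1 = 1.
Proof.
apply/matrixP => i j; rewrite [RHS]mxE.
case: i => [[|[|[|[|i]]]] Hi] //=; case: j => [[|[|[|[|j]]]] Hj] //=.
all: by rewrite ?mxE.
Qed.

Lemma Gmx_expr (A B : 'M[C]_2) m : Gmx A B ^+ m = Gmx (A ^+ m) (B ^+ m).
Proof.
elim: m => [|m IH]; first by rewrite !expr0 Gmx1.
by rewrite !exprS IH -!mulmxE Gmx_mul.
Qed.

(** [hdiag x y = H diag(x, y) H] for the Hadamard matrix [H]. *)
Definition hdiag (x y : C) : 'M[C]_2 :=
  \matrix_(i, j) if i == j then (x + y) / 2 else (x - y) / 2.

Lemma hdiag_mul x y x' y' : hdiag x y *m hdiag x' y' = hdiag (x * x') (y * y').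
Proof.
have two := two_neq0; apply/matrixP => i j; rewrite !mxE sum_ord2 !mxE.
case: i => [[|[|i]] Hi] //=; case: j => [[|[|j]] Hj] //=; by field.
Qed.

Lemma hdiag1 : hdiag 1 1 = 1.
Proof.
have two := two_neq0; apply/matrixP => i j; rewrite !mxE.
case: i => [[|[|i]] Hi] //=; case: j => [[|[|j]] Hj] //=; by field.
Qed.

Lemma hdiag_expr x y m : hdiag x y ^+ m = hdiag (x ^+ m) (y ^+ m).
Proof.
elim: m => [|m IH]; first by rewrite !expr0 hdiag1.
by rewrite !exprS IH -!mulmxE hdiag_mul.
Qed.

Lemma Gmx_hdiag_decomp x1 y1 x2 y2 :
  Gmx (hdiag x1 y1) (hdiag x2 y2) =
    x1 *: Gmx (hdiag 1 0) 0 + y1 *: Gmx (hdiag 0 1) 0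
    + x2 *: Gmx 0 (hdiag 1 0) + y2 *: Gmx 0 (hdiag 0 1).
Proof.
have two := two_neq0; apply/matrixP => i j; rewrite !mxE.
case: i => [[|[|[|[|i]]]] Hi] //=; case: j => [[|[|[|[|j]]]] Hj] //=.
all: rewrite ?mxE /=; by field.
Qed.

Lemma xyz_coupling_hdiag (a b c : R) :
  (0 +i* 1) *: (a%:C *: (PauliX R *t PauliX R) + b%:C *: (PauliY R *t PauliY R)
                + c%:C *: (PauliZ R *t PauliZ R)) =
  Gmx (hdiag ('i%C * (c + a - b)%:C) ('i%C * (c - a + b)%:C))
      (hdiag ('i%C * (- c + a + b)%:C) ('i%C * (- c - a - b)%:C)).
Proof.
have two := two_neq0; rewrite /PauliX /PauliY /PauliZ.
(* Naming ['i] keeps [/=] from computing products with this constructor. *)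
set I := 'i%C : C; have ii : I * I = -1 by rewrite -expr2 sqr_i.
apply/matrixP => i j; rewrite !mxE.
case: i => [[|[|[|[|i]]]] Hi] //=; case: j => [[|[|[|[|j]]]] Hj] //=.
all: rewrite ?mxE /= ?(mul0r, mulr0, mul1r, mulr1, mulN1r, mulrN1, mulNr, mulrN, opprK).
all: rewrite ?ii ?(rmorphD, rmorphB, rmorphN) /=; by field.
Qed.

Lemma expiE (t : R) : expi t = (cos t)%:C + 'i%C * (sin t)%:C.
Proof. by rewrite [LHS]complexE. Qed.

Lemma expiD (x y : R) : expi (x + y) = expi x * expi y.
Proof.
rewrite /expi cosD sinD; apply/eqP; rewrite eq_complex /=.
by apply/andP; split; apply/eqP; ring.
Qed.

Lemma conj_expi (x : R) : (expi x)^*%C = expi (- x).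
Proof. by rewrite /expi cosN sinN. Qed.

Lemma conjcM (a b : C) : (a * b)^*%C = a^*%C * b^*%C.
Proof. exact: rmorphM. Qed.

Lemma expi_mulN (x : R) : expi x * expi (- x) = 1.
Proof. by rewrite -expiD subrr /expi cos0 sin0. Qed.

Lemma expi_pihalf : expi (pi / 2) = 'i%C :> C.
Proof. by rewrite /expi cos_pihalf sin_pihalf. Qed.

Lemma conjc_i : ('i%C)^*%C = - 'i%C :> C.
Proof. by apply/eqP; rewrite eq_complex /= oppr0 !eqxx. Qed.

Definition exp_psum (z : C) (N : nat) : CN := \sum_(m < N) (m`!%:R)^-1 * z ^+ m.

Definition expC (z : C) : C := limn (exp_psum z).

Lemma expm_spectral n (M : 'M[C]_n) (r : seq (C * 'M[C]_n)) :
  (forall m, M ^+ m = \sum_(p <- r) p.1 ^+ m *: p.2) ->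
  (forall p, p \in r -> cvgn (exp_psum p.1)) ->
  expm M = \sum_(p <- r) expC p.1 *: p.2.
Proof.
move=> powM cvg_r; apply/matrixP => j k; rewrite !mxE summxE.
under eq_bigr do rewrite mxE.
have psumE N : (\sum_(m < N) (m`!%:R)^-1 *: M ^+ m) j k =
               \sum_(p <- r) exp_psum p.1 N * p.2 j k.
  under eq_bigr => m _ do rewrite powM scaler_sumr.
  rewrite exchange_big summxE; apply: eq_bigr => p _.
  by rewrite /exp_psum mulr_suml summxE; apply: eq_bigr => m _; rewrite !mxE mulrA.
under eq_fun do rewrite psumE.
have cvg_sum (s : seq (C * 'M[C]_n)) : {subset s <= r} ->
    (fun N => \sum_(p <- s) exp_psum p.1 N * p.2 j k : CN) @ \oo -->
    (\sum_(p <- s) expC p.1 * p.2 j k : CN).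
  elim: s => [|p s IHs] sr.
    by rewrite big_nil; under eq_fun do rewrite big_nil; exact: cvg_cst.
  rewrite big_cons; under eq_fun do rewrite big_cons.
  apply: cvgD; last by apply: IHs => q qs; apply: sr; rewrite inE qs orbT.
  by apply: cvgM; [apply: cvg_r; apply: sr; rewrite inE eqxx | exact: cvg_cst].
exact: (cvg_lim (@norm_hausdorff _ _) (cvg_sum r (fun p pr => pr))).
Qed.

Lemma normC_real (r : R) : `|r%:C| = `|r|%:C :> C.
Proof. by rewrite normc_def /= expr0n addr0 sqrtr_sqr. Qed.

Lemma cvg_real_complex (u : nat -> R) (x : R) :
  u @ \oo --> x -> (fun n => (u n)%:C : CN) @ \oo --> (x%:C : CN).
Proof.
move=> hu; apply/cvgrPdist_lt => e; rewrite ltcE => /andP[/eqP eI e0].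
move: hu => /cvgrPdist_lt /(_ (complex.Re e) e0); apply: filterS => n hn.
by rewrite -rmorphB normC_real ltcE /= eI eqxx.
Qed.

Lemma expr_i_double k : ('i%C : C) ^+ k.*2 = ((-1) ^+ k)%:C.
Proof. by rewrite -mul2n exprM sqr_i rmorphXn rmorphN1. Qed.

Lemma exp_psum_coef (t : R) m : (m`!%:R)^-1 * ('i%C * t%:C) ^+ m =
  (cos_coeff t m)%:C + 'i%C * (sin_coeff t m)%:C :> C.
Proof.
have natC n : ((n%:R : R))%:C = n%:R :> C by rewrite rmorph_nat.
rewrite /cos_coeff /sin_coeff /= exprMn.
have := odd_double_half m; case: (odd m) => /= hm; rewrite -hm; move: (m./2) => k {hm}.
- rewrite add1n exprS expr_i_double /= uphalf_double doubleK.
  rewrite !(rmorphM, rmorphXn, fmorphV, rmorphN1) /= ?natC; field.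
  by rewrite pnatr_eq0 -lt0n fact_gt0.
- rewrite (_ : (false + k.*2)%N = k.*2) // expr_i_double doubleK.
  rewrite !(rmorphM, rmorphXn, fmorphV, rmorphN1) /= ?natC; field.
  by rewrite pnatr_eq0 -lt0n fact_gt0.
Qed.

Lemma exp_psum_i_real (t : R) N : exp_psum ('i%C * t%:C) N =
  (series (cos_coeff t) N)%:C + 'i%C * (series (sin_coeff t) N)%:C.
Proof.
rewrite /exp_psum /series /=; under eq_bigr do rewrite exp_psum_coef.
by rewrite big_split /= -mulr_sumr -!rmorph_sum !big_mkord.
Qed.

Lemma exp_psum_i_real_cvg (t : R) : exp_psum ('i%C * t%:C) @ \oo --> (expi t : CN).
Proof.
rewrite (funext (exp_psum_i_real t)) expiE.
apply: cvgD; [|apply: cvgM; [exact: cvg_cst|]]; apply: cvg_real_complex.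
- by rewrite cos.unlock; exact: is_cvg_series_cos_coeff.
- by rewrite sin.unlock; exact: is_cvg_series_sin_coeff.
Qed.

Lemma expC_i_real (t : R) : expC ('i%C * t%:C) = expi t.
Proof. exact: (cvg_lim (@norm_hausdorff _ _) (@exp_psum_i_real_cvg t)). Qed.

Lemma expm_Gmx_hdiag_i (x y z w : R) :
  expm (Gmx (hdiag ('i%C * x%:C) ('i%C * y%:C)) (hdiag ('i%C * z%:C) ('i%C * w%:C))) =
  Gmx (hdiag (expi x) (expi y)) (hdiag (expi z) (expi w)).
Proof.
rewrite (@expm_spectral _ _
  [:: ('i%C * x%:C, Gmx (hdiag 1 0) 0); ('i%C * y%:C, Gmx (hdiag 0 1) 0);
      ('i%C * z%:C, Gmx 0 (hdiag 1 0)); ('i%C * w%:C, Gmx 0 (hdiag 0 1))]).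
- by rewrite !big_cons big_nil !expC_i_real addr0 Gmx_hdiag_decomp !addrA.
- by move=> m; rewrite Gmx_expr !hdiag_expr Gmx_hdiag_decomp !big_cons big_nil addr0 !addrA.
- by move=> p; rewrite !inE => /or4P[] /eqP ->; apply: cvgP; exact: exp_psum_i_real_cvg.
Qed.

Lemma polar_coords (x y r : R) : 0 <= r -> r ^+ 2 = x ^+ 2 + y ^+ 2 ->
  exists t : R, x = r * cos t /\ y = r * sin t.
Proof.
move=> r0 r2.
have [r00|rn0] := eqVneq r 0.
  by exists 0; move: r2; rewrite r00 expr0n !mul0r /= => h; split; nra.
have rp : 0 < r by rewrite lt0r rn0.
pose c := x / r.
have xE : x = r * c by rewrite /c mulrC divfK.
have c1 : -1 <= c <= 1.
  have : x ^+ 2 <= r ^+ 2 by rewrite r2 lerDl sqr_ge0.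
  rewrite xE exprMn -{2}(mulr1 (r ^+ 2)) ler_pM2l ?exprn_gt0 // => h.
  by apply/andP; split; nra.
have sinE : Num.sqrt (1 - c ^+ 2) = `|y| / r.
  have -> : 1 - c ^+ 2 = (y / r) ^+ 2.
    have y2 : y ^+ 2 = r ^+ 2 - x ^+ 2 by rewrite r2; ring.
    by rewrite /c !exprMn y2; field.
  by rewrite sqrtr_sqr normrM normfV (gtr0_norm rp).
exists (if 0 <= y then acos c else - acos c); split.
  by case: ifP => _; rewrite ?cosN acosK // ?in_itv /= xE.
case: ifP => y0; rewrite ?sinN sin_acos // sinE.
  by rewrite ger0_norm // mulrC divfK.
by rewrite ltr0_norm ?ltNge ?y0 // mulrN mulrC divfK // opprK.
Qed.

Lemma complex_polar (z : C) :
  exists (r t : R), [/\ 0 <= r, z = r%:C * expi t & z * z^*%C = (r ^+ 2)%:C].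
Proof.
case: z => x y.
have r0 : 0 <= Num.sqrt (x ^+ 2 + y ^+ 2) by exact: sqrtr_ge0.
have r2 : Num.sqrt (x ^+ 2 + y ^+ 2) ^+ 2 = x ^+ 2 + y ^+ 2.
  by rewrite sqr_sqrtr // addr_ge0 // sqr_ge0.
move: (Num.sqrt _) r0 r2 => r r0 r2.
have [t [xE yE]] := polar_coords r0 r2.
exists r, t; split => //.
  by rewrite xE yE; apply/eqP; rewrite eq_complex /=; apply/andP; split; apply/eqP; ring.
by rewrite r2; apply/eqP; rewrite eq_complex /=; apply/andP; split; apply/eqP; ring.
Qed.

Lemma adjmx_det n (M : 'M[C]_n) : \det (adjmx M) = (\det M)^*%C.
Proof. by rewrite /adjmx det_tr det_map_mx. Qed.

Lemma unitary_det_expi n (M : 'M[C]_n) : unitary M -> exists d : R, \det M = expi d.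
Proof.
move=> uM; have detM : \det M * (\det M)^*%C = 1 by rewrite -adjmx_det -det_mulmx uM det1.
have [r [d [r0 dM dMc]]] := complex_polar (\det M).
have r1 : r = 1.
  have /complexI r2 : (r ^+ 2)%:C = 1%:C :> C by rewrite -dMc detM.
  by nra.
by exists d; rewrite dM r1 mul1r.
Qed.

Lemma det_mx2 (P : 'M[C]_2) :
  \det P = P ord0 ord0 * P ord_max ord_max - P ord0 ord_max * P ord_max ord0.
Proof.
rewrite (expand_det_row _ ord0) sum_ord2 /cofactor !det_mx11 !mxE /=.
have -> : lift ord0 (0 : 'I_1) = ord_max :> 'I_2 by apply: val_inj.
have -> : lift ord_max (0 : 'I_1) = ord0 :> 'I_2 by apply: val_inj.
rewrite addn0 addn1 expr0 expr1; ring.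
Qed.

Lemma unitary2_rows (P : 'M[C]_2) : unitary P ->
  P ord0 ord0 * (P ord0 ord0)^*%C + P ord0 ord_max * (P ord0 ord_max)^*%C = 1 /\
  P ord0 ord0 * (P ord_max ord0)^*%C + P ord0 ord_max * (P ord_max ord_max)^*%C = 0.
Proof.
move=> uP; have e (i j : 'I_2) := congr1 (fun M : 'M[C]_2 => M i j) uP.
move: (e ord0 ord0) (e ord0 ord_max); rewrite /adjmx !mxE !sum_ord2 !mxE /=.
by rewrite mulr1n mulr0n.
Qed.

Lemma unitary2_row1E (P : 'M[C]_2) : unitary P ->
  P ord_max ord0 = - (\det P * (P ord0 ord_max)^*%C) /\
  P ord_max ord_max = \det P * (P ord0 ord0)^*%C.
Proof.
move=> /unitary2_rows; rewrite det_mx2.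
move: (P ord0 ord0) (P ord0 ord_max) (P ord_max ord0) (P ord_max ord_max) => p q r s.
move=> [pq1 pqrs]; have rs : p^*%C * r + q^*%C * s = 0.
  by have := congr1 conjc pqrs; rewrite rmorphD !rmorphM /= !conjcK oppr0.
split; apply/eqP; rewrite eq_sym -subr_eq0; apply/eqP.
  transitivity (r * (p * p^*%C + q * q^*%C - 1) - p * (p^*%C * r + q^*%C * s)); first ring.
  by rewrite pq1 rs subrr !mulr0 subr0.
transitivity (s * (p * p^*%C + q * q^*%C - 1) - q * (p^*%C * r + q^*%C * s)); first ring.
by rewrite pq1 rs subrr !mulr0 subr0.
Qed.

(** [Rx t = e^{itX}], in the convention [Rz t = e^{itZ}] of the statement. *)
Definition Rx (t : R) : 'M[C]_2 :=
  \matrix_(i, j) if i == j then (cos t)%:C else 'i%C * (sin t)%:C.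

Definition su2_mx (u v : C) : 'M[C]_2 :=
  \matrix_(i, j) if i == ord0 then (if j == ord0 then u else v)
                 else (if j == ord0 then - v^*%C else u^*%C).

Lemma Rz_Rx_Rz (t th t' : R) :
  Rz t *m Rx th *m Rz t' =
  su2_mx (expi (t + t') * (cos th)%:C) ('i%C * expi (t - t') * (sin th)%:C).
Proof.
apply/matrixP => i j; rewrite !mxE !sum_ord2 !mxE !sum_ord2 !mxE.
rewrite !conjcM !conj_expi !conjc_real conjc_i !opprD opprK !expiD.
by case: (ord2P i) => ->; case: (ord2P j) => -> /=; ring.
Qed.

Lemma su2_param (u v : C) : u * u^*%C + v * v^*%C = 1 ->
  exists t th t' : R,
    u = expi (t + t') * (cos th)%:C /\ v = 'i%C * expi (t - t') * (sin th)%:C.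
Proof.
move=> uv1.
have [p [al [p0 uE up]]] := complex_polar u.
have [q [be [q0 vE vq]]] := complex_polar v.
have pq1 : 1 ^+ 2 = p ^+ 2 + q ^+ 2.
  by apply: complexI; rewrite rmorphD /= -up -vq expr1n.
have [th [pE qE]] := polar_coords ler01 pq1.
exists ((al + be - pi / 2) / 2), th, ((al - be + pi / 2) / 2).
rewrite uE vE pE qE !mul1r -expi_pihalf -expiD !(mulrC _%:C).
by split; congr (expi _ * _); lra.
Qed.

Lemma unitary2_su2 (P : 'M[C]_2) (d : R) : unitary P -> \det P = expi d ->
  P = expi (d / 2) *:
      su2_mx (expi (- (d / 2)) * P ord0 ord0) (expi (- (d / 2)) * P ord0 ord_max).
Proof.
move=> /unitary2_row1E [P10 P11] detP.
have half : expi d = expi (d / 2) * expi (d / 2) by rewrite -expiD; congr expi; lra.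
apply/matrixP => i j; rewrite !mxE.
case: (ord2P i) => ->; case: (ord2P j) => -> /=.
- by rewrite mulrA expi_mulN mul1r.
- by rewrite mulrA expi_mulN mul1r.
- by rewrite P10 detP half conjcM conj_expi opprK; ring.
- by rewrite P11 detP half conjcM conj_expi opprK; ring.
Qed.

Lemma unitary2_ZXZ (P : 'M[C]_2) (d : R) : unitary P -> \det P = expi d ->
  exists t th t' : R, P = expi (d / 2) *: (Rz t *m Rx th *m Rz t').
Proof.
move=> uP detP; rewrite (unitary2_su2 uP detP).
have [pq1 _] := unitary2_rows uP.
have [|t [th [t' [-> ->]]]] :=
  @su2_param (expi (- (d / 2)) * P ord0 ord0) (expi (- (d / 2)) * P ord0 ord_max).
  rewrite !conjcM conj_expi opprK.
  transitivity (expi (d / 2) * expi (- (d / 2)) *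
                (P ord0 ord0 * (P ord0 ord0)^*%C + P ord0 ord_max * (P ord0 ord_max)^*%C)).
    by ring.
  by rewrite expi_mulN pq1 mul1r.
by exists t, th, t'; rewrite Rz_Rx_Rz.
Qed.

Lemma hdiag_expi (d th : R) : hdiag (expi (d + th)) (expi (d - th)) = expi d *: Rx th.
Proof.
have two := two_neq0; apply/matrixP => i j.
rewrite !mxE !expiD (expiE th) (expiE (- th)) cosN sinN rmorphN.
by case: (i == j) => /=; field.
Qed.

End TwoQubit.

Theorem lemma1 (R : realType) (A B : 'M[R[i]]_2) :
  unitary A -> unitary B -> \det A * \det B = 1 ->
  exists (t1 t2 t3 t4 a b c : R),
    Gmx A B =
      Gmx (Rz t1) (Rz t2)
      *m expm ((0 +i* 1) *: (a%:C *: (PauliX R *t PauliX R)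
                      + b%:C *: (PauliY R *t PauliY R)
                      + c%:C *: (PauliZ R *t PauliZ R)))
      *m Gmx (Rz t3) (Rz t4).
Proof.
move=> uA uB detAB.
have [d detA] := unitary_det_expi uA.
have detB : \det B = expi (- d).
  by rewrite -[LHS]mul1r -(expi_mulN d) mulrAC -detA detAB mul1r.
have [t1 [thA [t3 ->]]] := unitary2_ZXZ uA detA.
have [t2 [thB [t4 ->]]] := unitary2_ZXZ uB detB.
exists t1, t2, t3, t4, ((thA + thB) / 2), ((thB - thA) / 2), (d / 2).
rewrite xyz_coupling_hdiag expm_Gmx_hdiag_i.
rewrite (_ : d / 2 + (thA + thB) / 2 - (thB - thA) / 2 = d / 2 + thA); last by lra.
rewrite (_ : d / 2 - (thA + thB) / 2 + (thB - thA) / 2 = d / 2 - thA); last by lra.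
rewrite (_ : - (d / 2) + (thA + thB) / 2 + (thB - thA) / 2 = - d / 2 + thB); last by lra.
rewrite (_ : - (d / 2) - (thA + thB) / 2 - (thB - thA) / 2 = - d / 2 - thB); last by lra.
by rewrite !hdiag_expi !Gmx_mul -!scalemxAr -!scalemxAl.
Qed.
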